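(* Let $\Sigma$ be a finitary signature, $X$ a set, and fix $p\in X\cup\Sigma_0$. Then the cpo $\Psi_\Sigma X$ (all $\Sigma$-trees over $X$, ordered by cutting) is a conservative completion of its subposet $\Phi_\Sigma X$ of finite trees. Explicitly, for every continuous map $f\colon\Phi_\Sigma X\to Q$ into a cpo $Q$, the map $\bar f(s)=\bigsqcup_{n\in\mathbb N} f(\partial_n s)$ is the unique continuous map $\Psi_\Sigma X\to Q$ extending $f$.
   Context: A finitary signature is a sequence $\Sigma=(\Sigma_n)_{n\in\mathbb N}$ of sets. A $\Sigma$-tree is an ordered rooted tree, finite or infinite, with nodes labelled in $\bigcup_n\Sigma_n$ such that a node labelled by $\sigma\in\Sigma_n$ has exactly $n$ children (up to isomorphism). A $\Sigma$-tree over $X$ is a $(\Sigma+X)$-tree with elements of $X$ as nullary symbols. $\Psi_\Sigma X$: all $\Sigma$-trees over $X$; $\Phi_\Sigma X$: the finite ones. $\partial_n t$: delete all nodes of height $>n$ and relabel the remaining nodes of height $n$ by $p$. Order by cutting: $s\le s'$ iff $s=s'$ or $s=\partial_n s'$ for some $n$. A map between posets is continuous if it is monotone and preserves all existing directed joins. A conservative completion of a poset $P$ is a cpo $\bar P$ containing $P$ as a subposet closed under all directed joins existing in $P$, such that every continuous map $f\colon P\to Q$ into a cpo $Q$ has a unique continuous extension $\bar f\colon\bar P\to Q$. *)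

From Stdlib Require Import List Arith.
Import ListNotations.

Definition is_poset {T : Type} (le : T -> T -> Prop) : Prop :=
  (forall x, le x x) /\
  (forall x y, le x y -> le y x -> x = y) /\
  (forall x y z, le x y -> le y z -> le x z).

Definition directed {T : Type} (le : T -> T -> Prop) (D : T -> Prop) : Prop :=
  (exists x, D x) /\
  (forall x y, D x -> D y -> exists z, D z /\ le x z /\ le y z).

Definition is_join {T : Type} (le : T -> T -> Prop) (D : T -> Prop) (j : T) : Prop :=
  (forall x, D x -> le x j) /\
  (forall u, (forall x, D x -> le x u) -> le j u).

Definition cpo {T : Type} (le : T -> T -> Prop) : Prop :=
  is_poset le /\ (forall D, directed le D -> exists j, is_join le D j).

Definition image {A B : Type} (f : A -> B) (D : A -> Prop) : B -> Prop :=
  fun y => exists x, D x /\ y = f x.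

Definition continuous {A B : Type} (leA : A -> A -> Prop) (leB : B -> B -> Prop)
  (f : A -> B) : Prop :=
  (forall x y, leA x y -> leB (f x) (f y)) /\
  (forall D j, directed leA D -> is_join leA D j -> is_join leB (image f D) (f j)).

(* C (ordered by leC) is a conservative completion of P (ordered by leP),
   P being identified with a subposet of C via the embedding e. *)
Definition conservative_completion {P C : Type}
  (leP : P -> P -> Prop) (leC : C -> C -> Prop) (e : P -> C) : Prop :=
  cpo leC /\
  (forall x y, e x = e y -> x = y) /\
  (forall x y, leP x y <-> leC (e x) (e y)) /\
  (forall D j, directed leP D -> is_join leP D j -> is_join leC (image e D) (e j)) /\
  (forall (Q : Type) (leQ : Q -> Q -> Prop), cpo leQ ->
     forall f : P -> Q, continuous leP leQ f ->
     exists! g : C -> Q, continuous leC leQ g /\ (forall x, g (e x) = f x)).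

(* A finitary signature is Sig : nat -> Type (Sig n = n-ary symbols).
   Labels of Sigma-trees over X: symbols of Sigma, or elements of X (nullary). *)
Definition label (Sig : nat -> Type) (X : Type) : Type := ({n : nat & Sig n} + X)%type.

Definition arity {Sig : nat -> Type} {X : Type} (l : label Sig X) : nat :=
  match l with
  | inl (existT _ n _) => n
  | inr _ => 0
  end.

(* A tree is given by its labelling of node addresses: a node is a path
   [i1; ...; ik] from the root (i-th child = index i, 0-based); None = no node. *)
Definition rawtree (Sig : nat -> Type) (X : Type) : Type := list nat -> option (label Sig X).

(* ordered rooted tree (finite or infinite) with a node labelled by an
   n-ary symbol having exactly the children 0, ..., n-1 *)
Definition is_tree {Sig : nat -> Type} {X : Type} (t : rawtree Sig X) : Prop :=
  t [] <> None /\
  (forall w i, (exists l, t (w ++ [i]) = Some l) <->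
               (exists l, t w = Some l /\ i < arity l)).

Definition Psi (Sig : nat -> Type) (X : Type) : Type := {t : rawtree Sig X | is_tree t}.

Definition finite_tree {Sig : nat -> Type} {X : Type} (t : rawtree Sig X) : Prop :=
  exists ws : list (list nat), forall w, t w <> None -> In w ws.

Definition Phi (Sig : nat -> Type) (X : Type) : Type := {t : Psi Sig X | finite_tree (proj1_sig t)}.

Definition Phi_to_Psi {Sig : nat -> Type} {X : Type} (x : Phi Sig X) : Psi Sig X := proj1_sig x.

(* cutting: partial_n t deletes the nodes of height > n and relabels the
   remaining nodes of height n by p (height of node w = length w) *)
Definition cut {Sig : nat -> Type} {X : Type} (p : label Sig X) (n : nat)
  (t : rawtree Sig X) : rawtree Sig X :=
  fun w =>
    if Nat.ltb (length w) n then t w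
    else if Nat.eqb (length w) n then
      match t w with Some _ => Some p | None => None end
    else None.

Definition cut_le {Sig : nat -> Type} {X : Type} (p : label Sig X)
  (s s' : rawtree Sig X) : Prop :=
  s = s' \/ exists n, s = cut p n s'.

Definition Psi_le {Sig : nat -> Type} {X : Type} (p : label Sig X)
  (s s' : Psi Sig X) : Prop := cut_le p (proj1_sig s) (proj1_sig s').

Definition Phi_le {Sig : nat -> Type} {X : Type} (p : label Sig X)
  (x y : Phi Sig X) : Prop := Psi_le p (Phi_to_Psi x) (Phi_to_Psi y).

From Stdlib Require Import List Arith Lia.
From Stdlib Require Import FunctionalExtensionality ProofIrrelevance Classical ClassicalEpsilon.
Import ListNotations.

(* Cutting is idempotent and composes by [min], so the order by cutting is a
   partial order in which every finite tree is one of its own cuts.  A directed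
   family of trees stabilises depth by depth: above some member all members
   have the same n-th cut, since climbing strictly to a different n-th cut
   forces the climbed-from tree to have height below n and the climbed-to one
   to be taller.  The stable cuts glue to the join, which is therefore
   approximated at every depth by members of the family.  Every tree is the
   join of its cuts, so a continuous extension of [f] must send [s] to the
   join of [f] on the cuts of [s]; conversely that formula is monotone and,
   by the approximation property, preserves directed joins. *)

Section Joins.
Context {T : Type} {le : T -> T -> Prop}.

Lemma is_join_unique {D a b} : is_poset le -> is_join le D a -> is_join le D b -> a = b.
Proof.
  intros [_ [Hanti _]] [Ha Ha'] [Hb Hb']. apply Hanti; [apply Ha' | apply Hb']; assumption.
Qed.

Lemma is_join_ext {D D' j} : (forall x, D x <-> D' x) -> is_join le D j -> is_join le D' j.
Proof.
  intros E [Hub Hleast]. split.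
  - intros x Hx. apply Hub, E, Hx.
  - intros u Hu. apply Hleast. intros x Hx. apply Hu, E, Hx.
Qed.

Lemma is_join_max {D m} : D m -> (forall x, D x -> le x m) -> is_join le D m.
Proof. intros Hm Hub. split; [exact Hub | intros u Hu; apply Hu, Hm]. Qed.

Lemma is_join_le_subset {D D' a b} :
  is_join le D a -> is_join le D' b -> (forall x, D x -> D' x) -> le a b.
Proof. intros [_ Ha] [Hb _] Hsub. apply Ha. intros x Hx. apply Hb, Hsub, Hx. Qed.

End Joins.

Lemma directed_image {A B : Type} (leA : A -> A -> Prop) (leB : B -> B -> Prop) (f : A -> B) D :
  (forall x y, leA x y -> leB (f x) (f y)) -> directed leA D -> directed leB (image f D).
Proof.
  intros Hmono [[x0 Hx0] Hdir]. split.
  - exists (f x0), x0. auto.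
  - intros a b [x [Hx ->]] [y [Hy ->]]. destruct (Hdir x y Hx Hy) as [z [Hz [Hxz Hyz]]].
    exists (f z). split; [exists z; auto | auto].
Qed.

Lemma image_image {A B C : Type} (f : A -> B) (g : B -> C) D y :
  image g (image f D) y <-> image (fun x => g (f x)) D y.
Proof.
  split.
  - intros [b [[a [Ha ->]] ->]]. exists a. auto.
  - intros [a [Ha ->]]. exists (f a). split; [exists a; auto | reflexivity].
Qed.

Section Cutting.
Context {Sig : nat -> Type} {X : Type} (p : label Sig X).

Ltac cut_cases :=
  repeat match goal with
  | |- context[Nat.ltb ?a ?b] => destruct (Nat.ltb_spec a b)
  | |- context[Nat.eqb ?a ?b] => destruct (Nat.eqb_spec a b)
  end; try lia.

Lemma cut_cut n m (t : rawtree Sig X) : cut p n (cut p m t) = cut p (Nat.min n m) t.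
Proof.
  extensionality w. unfold cut. cut_cases; try reflexivity; destruct (t w); reflexivity.
Qed.

Lemma cut_lt n (t : rawtree Sig X) w : length w < n -> cut p n t w = t w.
Proof. intros H. unfold cut. cut_cases. reflexivity. Qed.

Lemma cut_gt n (t : rawtree Sig X) w : n < length w -> cut p n t w = None.
Proof. intros H. unfold cut. cut_cases; reflexivity. Qed.

Lemma cut_defined n (t : rawtree Sig X) w :
  cut p n t w <> None -> length w <= n /\ t w <> None.
Proof.
  unfold cut. cut_cases; intros Hw; split; try lia; auto; try congruence.
  destruct (t w); congruence.
Qed.

Lemma cut_ext n (a b : rawtree Sig X) :
  (forall w, length w <= n -> a w = b w) -> cut p n a = cut p n b.
Proof. intros H. extensionality w. unfold cut. cut_cases; try rewrite H by lia; reflexivity. Qed.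

Lemma cut_eq_le m n (a b : rawtree Sig X) :
  m <= n -> cut p n a = cut p n b -> cut p m a = cut p m b.
Proof.
  intros Hmn E. rewrite <- (Nat.min_l m n Hmn), <- !cut_cut, E. reflexivity.
Qed.

Lemma cut_eq_lt n (a b : rawtree Sig X) w :
  cut p n a = cut p n b -> length w < n -> a w = b w.
Proof. intros E Hw. rewrite <- (cut_lt n a w Hw), <- (cut_lt n b w Hw), E. reflexivity. Qed.

Lemma tree_prefix (t : rawtree Sig X) : is_tree t ->
  forall v w, t (w ++ v) <> None -> t w <> None.
Proof.
  intros [_ Hchild]. induction v as [|i v IHv] using rev_ind; intros w H.
  - rewrite app_nil_r in H. exact H.
  - apply IHv. rewrite app_assoc in H.
    destruct (t ((w ++ v) ++ [i])) as [l|] eqn:E; [|congruence].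
    destruct (proj1 (Hchild (w ++ v) i) (ex_intro _ l E)) as [l' [E' _]]. congruence.
Qed.

Lemma cut_tree n (t : rawtree Sig X) : arity p = 0 -> is_tree t -> is_tree (cut p n t).
Proof.
  intros hp [Hroot Hchild]. split.
  - unfold cut. cbn [length]. cut_cases; [exact Hroot|]. destruct (t []); congruence.
  - intros w i. unfold cut. rewrite length_app. cbn [length]. cut_cases.
    + apply Hchild.
    + destruct (t (w ++ [i])) as [l|] eqn:E.
      * split; intros _; [|eauto].
        destruct (proj1 (Hchild w i) (ex_intro _ l E)) as [l' Hl']. eauto.
      * split; intros [l Hl]; [congruence|].
        destruct (proj2 (Hchild w i) (ex_intro _ l Hl)) as [l' Hl']. congruence.
    (* at the cutting height the new leaves are labelled by the nullary [p] *)
    + split; intros [l Hl]; [congruence|]. destruct Hl as [Hw Hi].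
      destruct (t w); inversion Hw; subst. rewrite hp in Hi. lia.
    + split; intros [l Hl]; [congruence|]. destruct Hl as [Hw _]. congruence.
Qed.

Fixpoint level (t : rawtree Sig X) (k : nat) : list (list nat) :=
  match k with
  | 0 => [[]]
  | S k => flat_map (fun w => match t w with
                             | Some l => map (fun i => w ++ [i]) (seq 0 (arity l))
                             | None => [] end) (level t k)
  end.

Lemma in_level (t : rawtree Sig X) : is_tree t ->
  forall w, t w <> None -> In w (level t (length w)).
Proof.
  intros Ht. induction w as [|i w IHw] using rev_ind; intros Hw.
  - left. reflexivity.
  - rewrite length_app, Nat.add_1_r. apply in_flat_map. exists w.
    destruct (t (w ++ [i])) as [l|] eqn:E; [|congruence].
    destruct (proj1 (proj2 Ht w i) (ex_intro _ l E)) as [l' [E' Hi]].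
    split.
    + apply IHw. congruence.
    + rewrite E'. apply in_map_iff. exists i. split; [reflexivity|]. apply in_seq. lia.
Qed.

Lemma cut_finite n (t : rawtree Sig X) : is_tree t -> finite_tree (cut p n t).
Proof.
  intros Ht. exists (flat_map (level t) (seq 0 (S n))). intros w Hw.
  destruct (cut_defined n t w Hw) as [Hlen Htw].
  apply in_flat_map. exists (length w). split.
  - apply in_seq. lia.
  - apply in_level; assumption.
Qed.

Lemma finite_tree_cut n (t : rawtree Sig X) : finite_tree t -> finite_tree (cut p n t).
Proof.
  intros [ws Hws]. exists ws. intros w Hw. apply Hws, (cut_defined n t w Hw).
Qed.

Lemma finite_tree_cut_id (t : rawtree Sig X) : finite_tree t -> exists n, cut p n t = t.
Proof.
  intros [ws Hws]. set (N := S (list_max (map (@length nat) ws))).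
  exists N. extensionality w. destruct (Nat.lt_ge_cases (length w) N) as [Hw|Hw].
  - apply cut_lt, Hw.
  - destruct (t w) as [l|] eqn:E.
    + exfalso. assert (Hin : In (length w) (map (@length nat) ws)).
      { apply in_map, Hws. congruence. }
      pose proof (proj1 (list_max_le (map (@length nat) ws) _) (le_n _)) as Hmax.
      rewrite Forall_forall in Hmax. specialize (Hmax _ Hin). unfold N in Hw. lia.
    + unfold cut. cut_cases; rewrite ?E; reflexivity.
Qed.

Lemma cut_le_refl (t : rawtree Sig X) : cut_le p t t.
Proof. left. reflexivity. Qed.

Lemma cut_le_cut n (t : rawtree Sig X) : cut_le p (cut p n t) t.
Proof. right. exists n. reflexivity. Qed.

Lemma cut_le_trans (a b c : rawtree Sig X) : cut_le p a b -> cut_le p b c -> cut_le p a c.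
Proof.
  intros [->|[n ->]] [->|[m ->]]; try apply cut_le_refl; try apply cut_le_cut.
  rewrite cut_cut. apply cut_le_cut.
Qed.

Lemma cut_le_antisym (a b : rawtree Sig X) : cut_le p a b -> cut_le p b a -> a = b.
Proof.
  intros [->|[n Hn]] [Hm|[m Hm]]; auto.
  assert (Ha : a = cut p (Nat.min n m) a) by (rewrite Hn at 1; rewrite Hm, cut_cut; reflexivity).
  rewrite Hm. rewrite Ha at 2. rewrite cut_cut.
  replace (Nat.min m (Nat.min n m)) with (Nat.min n m) by lia. exact Ha.
Qed.

Lemma cut_le_cut_mono n m (t : rawtree Sig X) : n <= m -> cut_le p (cut p n t) (cut p m t).
Proof. intros Hnm. rewrite <- (Nat.min_l n m Hnm), <- cut_cut. apply cut_le_cut. Qed.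

Lemma cut_le_finite (a b : rawtree Sig X) : cut_le p a b -> finite_tree b -> finite_tree a.
Proof. intros [->|[n ->]] Hb; [exact Hb | apply finite_tree_cut, Hb]. Qed.

Lemma cut_le_of_cut_approx_above (d l : rawtree Sig X) :
  (forall n, exists z, cut_le p d z /\ cut p n z = cut p n l) -> cut_le p d l.
Proof.
  intros Happrox. destruct (classic (exists m, d = cut p m l)) as [Hcut|Hnot]; [right; exact Hcut|].
  left. extensionality w. destruct (Happrox (S (length w))) as [z [[->|[m ->]] Hz]].
  - apply (cut_eq_lt _ _ _ _ Hz). lia.
  - destruct (Nat.le_gt_cases m (length w)) as [Hm|Hm].
    + exfalso. apply Hnot. exists m. apply (cut_eq_le m (S (length w))); [lia | exact Hz].
    + rewrite cut_lt by exact Hm. apply (cut_eq_lt _ _ _ _ Hz). lia.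
Qed.

Lemma cut_le_of_cut_approx_below (a u : rawtree Sig X) : is_tree a ->
  (forall n, exists z, cut p n z = cut p n a /\ cut_le p z u) -> cut_le p a u.
Proof.
  intros Ha Happrox. destruct (classic (exists m, a = cut p m u)) as [Hcut|Hnot]; [right; exact Hcut|].
  left. extensionality w. destruct (Happrox (S (S (length w)))) as [z [Hz [->|[m ->]]]].
  - apply (cut_eq_lt _ _ _ _ (eq_sym Hz)). lia.
  - destruct (Nat.le_gt_cases m (length w)) as [Hm|Hm].
    + (* [a] has no node at height [S m]: its prefix of that length would be one *)
      exfalso. apply Hnot. exists m. extensionality v.
      destruct (Nat.le_gt_cases (length v) m) as [Hv|Hv].
      * symmetry. apply (cut_eq_lt _ _ _ _ Hz). lia.
      * rewrite cut_gt by exact Hv. destruct (a v) eqn:E; [exfalso|reflexivity].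
        assert (Hpre : a (firstn (S m) v) <> None).
        { apply (tree_prefix a Ha (skipn (S m) v)). rewrite firstn_skipn. congruence. }
        assert (Hlen : length (firstn (S m) v) = S m) by (apply firstn_length_le; lia).
        apply Hpre. rewrite <- (cut_eq_lt _ _ _ _ Hz) by lia. apply cut_gt. lia.
    + symmetry. rewrite <- (cut_lt m u w Hm). apply (cut_eq_lt _ _ _ _ Hz). lia.
Qed.

Definition deep (k : nat) (t : rawtree Sig X) : Prop := forall j, j < k -> cut p j t <> t.

Lemma deep_step n k (d d' : rawtree Sig X) :
  cut_le p d d' -> cut p n d <> cut p n d' -> deep k d -> k < n /\ deep (S k) d'.
Proof.
  intros [->|[m ->]] Hne Hdeep; [congruence|].
  assert (Hmn : m < n).
  { destruct (Nat.lt_ge_cases m n) as [|Hnm]; [assumption|].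
    exfalso. apply Hne. rewrite cut_cut, Nat.min_l by exact Hnm. reflexivity. }
  assert (Hkm : k <= m).
  { destruct (Nat.le_gt_cases k m) as [|Hmk]; [assumption|].
    exfalso. apply (Hdeep m Hmk). rewrite cut_cut, Nat.min_id. reflexivity. }
  split; [lia|]. intros j Hj Hcut. apply Hne.
  rewrite <- Hcut, !cut_cut. f_equal. lia.
Qed.

End Cutting.

Section TreeOrder.
Context {Sig : nat -> Type} {X : Type} (p : label Sig X).

Lemma Psi_eq (a b : Psi Sig X) : proj1_sig a = proj1_sig b -> a = b.
Proof. destruct a, b. simpl. intros ->. f_equal. apply proof_irrelevance. Qed.

Lemma Phi_to_Psi_inj (x y : Phi Sig X) : Phi_to_Psi x = Phi_to_Psi y -> x = y.
Proof. destruct x, y. unfold Phi_to_Psi. simpl. intros ->. f_equal. apply proof_irrelevance. Qed.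

Lemma Psi_poset : is_poset (@Psi_le Sig X p).
Proof.
  split; [|split]; unfold Psi_le.
  - intros x. apply cut_le_refl.
  - intros x y Hxy Hyx. apply Psi_eq, (cut_le_antisym p _ _ Hxy Hyx).
  - intros x y z. apply cut_le_trans.
Qed.

Lemma Psi_cut_stabilizes (D : Psi Sig X -> Prop) : (exists d, D d) ->
  forall n, exists s, D s /\
    forall d, D d -> Psi_le p s d -> cut p n (proj1_sig d) = cut p n (proj1_sig s).
Proof.
  intros [d0 Hd0] n. apply NNPP. intros Hnone.
  assert (Hclimb : forall e, D e -> exists d, D d /\ Psi_le p e d /\
                     cut p n (proj1_sig e) <> cut p n (proj1_sig d)).
  { intros e He. apply NNPP. intros Hno. apply Hnone. exists e. split; [exact He|].
    intros d Hd Hed. apply NNPP. intros Hne. apply Hno. exists d.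
    split; [exact Hd|]. split; [exact Hed|]. intros E. apply Hne. symmetry. exact E. }
  assert (Hdeep : forall k, exists d, D d /\ deep p k (proj1_sig d) /\ k <= n).
  { induction k as [|k [d [Hd [Hk Hkn]]]].
    - exists d0. split; [exact Hd0|]. split; [intros j Hj; lia | lia].
    - destruct (Hclimb d Hd) as [d' [Hd' [Hle Hne]]].
      destruct (deep_step p n k _ _ Hle Hne Hk) as [Hkn' Hk'].
      exists d'. split; [exact Hd'|]. split; [exact Hk' | lia]. }
  destruct (Hdeep (S n)) as [_ [_ [_ Hle]]]. lia.
Qed.

Lemma Psi_directed_join (D : Psi Sig X -> Prop) : directed (Psi_le p) D ->
  exists l, is_join (Psi_le p) D l /\
    forall n, exists z, D z /\ cut p n (proj1_sig z) = cut p n (proj1_sig l).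
Proof.
  intros HD. destruct (choice _ (Psi_cut_stabilizes D (proj1 HD))) as [s Hs].
  assert (Hcompat : forall m n, m <= n ->
            cut p m (proj1_sig (s m)) = cut p m (proj1_sig (s n))).
  { intros m n Hmn.
    destruct (proj2 HD (s m) (s n) (proj1 (Hs m)) (proj1 (Hs n))) as [u [Hu [Hmu Hnu]]].
    rewrite <- (proj2 (Hs m) u Hu Hmu).
    apply (cut_eq_le p m n _ _ Hmn), (proj2 (Hs n) u Hu Hnu). }
  set (l := fun w => proj1_sig (s (S (length w))) w).
  assert (Hl : forall n, cut p n l = cut p n (proj1_sig (s n))).
  { intros n. transitivity (cut p n (proj1_sig (s (S n)))).
    - apply cut_ext. intros w Hw. unfold l.
      apply (cut_eq_lt p (S (length w))); [apply Hcompat | ]; lia.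
    - symmetry. apply Hcompat. lia. }
  assert (Hl_tree : is_tree l).
  { assert (Hagree : forall n w, length w < n -> l w = proj1_sig (s n) w).
    { intros n w Hw. exact (cut_eq_lt p n _ _ w (Hl n) Hw). }
    split.
    - rewrite (Hagree 1) by (simpl; lia). apply (proj2_sig (s 1)).
    - intros w i. rewrite (Hagree (S (S (length w))) w), (Hagree (S (S (length w))) (w ++ [i]))
        by (rewrite ?length_app; simpl; lia).
      apply (proj2_sig (s (S (S (length w))))). }
  exists (exist _ l Hl_tree). split; [split|].
  - intros d Hd. apply cut_le_of_cut_approx_above. intros n.
    destruct (proj2 HD d (s n) Hd (proj1 (Hs n))) as [z [Hz [Hdz Hsz]]].
    exists (proj1_sig z). split; [exact Hdz|]. simpl. rewrite Hl. exact (proj2 (Hs n) z Hz Hsz).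
  - intros u Hu. apply cut_le_of_cut_approx_below; [exact Hl_tree|]. intros n.
    exists (proj1_sig (s n)). split; [symmetry; apply Hl | apply Hu, (proj1 (Hs n))].
  - intros n. exists (s n). split; [apply (proj1 (Hs n)) | symmetry; apply Hl].
Qed.

Lemma Psi_cpo : cpo (@Psi_le Sig X p).
Proof.
  split; [exact Psi_poset|]. intros D HD.
  destruct (Psi_directed_join D HD) as [l [Hl _]]. exists l. exact Hl.
Qed.

Lemma Psi_join_cut_attained (D : Psi Sig X -> Prop) j :
  directed (Psi_le p) D -> is_join (Psi_le p) D j ->
  forall n, exists z, D z /\ cut p n (proj1_sig z) = cut p n (proj1_sig j).
Proof.
  intros HD Hj. destruct (Psi_directed_join D HD) as [l [Hl Happrox]].
  rewrite (is_join_unique Psi_poset Hj Hl). exact Happrox.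
Qed.

End TreeOrder.

Section Completion.
Context {Sig : nat -> Type} {X : Type} (p : label Sig X).

Definition cuts_of (s : Psi Sig X) : Phi Sig X -> Prop :=
  fun x => exists n, proj1_sig (Phi_to_Psi x) = cut p n (proj1_sig s).

Lemma cuts_of_le s x : cuts_of s x -> Psi_le p (Phi_to_Psi x) s.
Proof. intros [n Hn]. unfold Psi_le. rewrite Hn. apply cut_le_cut. Qed.

Lemma cuts_of_mono s s' x : Psi_le p s s' -> cuts_of s x -> cuts_of s' x.
Proof.
  intros [E|[m Hm]] [n Hn].
  - exists n. rewrite Hn, E. reflexivity.
  - exists (Nat.min n m). rewrite Hn, Hm, cut_cut. reflexivity.
Qed.

Lemma cuts_of_self (x : Phi Sig X) : cuts_of (Phi_to_Psi x) x.
Proof.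
  destruct (finite_tree_cut_id p _ (proj2_sig x)) as [n Hn]. exists n. symmetry. exact Hn.
Qed.

Lemma Phi_to_Psi_directed {D : Phi Sig X -> Prop} :
  directed (Phi_le p) D -> directed (Psi_le p) (image Phi_to_Psi D).
Proof. apply directed_image. intros x y Hxy. exact Hxy. Qed.

Lemma Phi_join_is_Psi_join (D : Phi Sig X -> Prop) j :
  directed (Phi_le p) D -> is_join (Phi_le p) D j ->
  is_join (Psi_le p) (image Phi_to_Psi D) (Phi_to_Psi j).
Proof.
  intros HD [Hub Hleast].
  destruct (Psi_directed_join p _ (Phi_to_Psi_directed HD)) as [l [[Hlub Hlleast] _]].
  assert (Hlj : Psi_le p l (Phi_to_Psi j)).
  { apply Hlleast. intros t [x [Hx ->]]. apply Hub, Hx. }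
  (* below the finite tree [j], the join [l] in [Psi] is finite, hence a competitor in [Phi] *)
  set (lfin := exist _ l (cut_le_finite p _ _ Hlj (proj2_sig j)) : Phi Sig X).
  assert (Hjl : Phi_le p j lfin).
  { apply Hleast. intros x Hx. apply Hlub. exists x. auto. }
  split.
  - intros t [x [Hx ->]]. apply Hub, Hx.
  - intros u Hu. apply (cut_le_trans p _ (proj1_sig l)); [exact Hjl | apply Hlleast, Hu].
Qed.

Section Cuts.
Hypothesis hp : arity p = 0.

Definition cutPhi (n : nat) (s : Psi Sig X) : Phi Sig X :=
  exist _ (exist _ (cut p n (proj1_sig s)) (cut_tree p n _ hp (proj2_sig s)))
    (cut_finite p n _ (proj2_sig s)).

Lemma cuts_of_directed s : directed (Phi_le p) (cuts_of s).
Proof.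
  split.
  - exists (cutPhi 0 s). exists 0. reflexivity.
  - intros x y [n Hn] [m Hm]. exists (cutPhi (Nat.max n m) s).
    split; [exists (Nat.max n m); reflexivity|].
    unfold Phi_le, Psi_le. simpl. rewrite Hn, Hm. split; apply cut_le_cut_mono; lia.
Qed.

Lemma cuts_of_join s : is_join (Psi_le p) (image Phi_to_Psi (cuts_of s)) s.
Proof.
  split.
  - intros t [x [Hx ->]]. apply cuts_of_le, Hx.
  - intros u Hu. apply cut_le_of_cut_approx_below; [apply (proj2_sig s)|]. intros n.
    exists (cut p n (proj1_sig s)). split.
    + rewrite cut_cut, Nat.min_id. reflexivity.
    + apply (Hu (Phi_to_Psi (cutPhi n s))). exists (cutPhi n s). split; [exists n|]; reflexivity.
Qed.

Lemma extension_is_join {Q : Type} {leQ : Q -> Q -> Prop} {f : Phi Sig X -> Q} {g} :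
  continuous (Psi_le p) leQ g -> (forall x, g (Phi_to_Psi x) = f x) ->
  forall s, is_join leQ (image f (cuts_of s)) (g s).
Proof.
  intros [_ Hg] Hgf s.
  apply (is_join_ext (D := image g (image Phi_to_Psi (cuts_of s)))).
  - intros q. rewrite image_image. split; intros [x [Hx ->]]; exists x; auto.
  - apply Hg; [apply Phi_to_Psi_directed, cuts_of_directed | apply cuts_of_join].
Qed.

Section Extension.
Context {Q : Type} {leQ : Q -> Q -> Prop} (HQ : cpo leQ).
Context {f : Phi Sig X -> Q} (Hf : continuous (Phi_le p) leQ f).

Lemma extension_directed s : directed leQ (image f (cuts_of s)).
Proof. exact (directed_image _ _ _ _ (proj1 Hf) (cuts_of_directed s)). Qed.

Definition extension (s : Psi Sig X) : Q :=
  proj1_sig (constructive_indefinite_description _ (proj2 HQ _ (extension_directed s))).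

Lemma extension_spec s : is_join leQ (image f (cuts_of s)) (extension s).
Proof. exact (proj2_sig (constructive_indefinite_description _ (proj2 HQ _ (extension_directed s)))). Qed.

Lemma extension_mono s s' : Psi_le p s s' -> leQ (extension s) (extension s').
Proof.
  intros Hss'. apply (is_join_le_subset (extension_spec s) (extension_spec s')).
  intros q [x [Hx ->]]. exists x. split; [exact (cuts_of_mono s s' x Hss' Hx) | reflexivity].
Qed.

Lemma extension_continuous : continuous (Psi_le p) leQ extension.
Proof.
  destruct (proj1 HQ) as [_ [_ HQtrans]].
  split; [exact extension_mono|]. intros D j HD Hj. split.
  - intros q [d [Hd ->]]. apply extension_mono, (proj1 Hj d Hd).
  - (* every cut of [j] is already a cut of a member of [D] *)
    intros u Hu. apply (proj2 (extension_spec j)). intros q [x [[n Hn] ->]].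
    destruct (Psi_join_cut_attained p D j HD Hj n) as [z [Hz Hzj]].
    apply (HQtrans _ (extension z)).
    + apply (proj1 (extension_spec z)). exists x. split; [|reflexivity].
      exists n. rewrite Hn, Hzj. reflexivity.
    + apply Hu. exists z. auto.
Qed.

Lemma extension_extends x : extension (Phi_to_Psi x) = f x.
Proof.
  apply (is_join_unique (proj1 HQ) (extension_spec _)). apply is_join_max.
  - exists x. split; [apply cuts_of_self | reflexivity].
  - intros q [y [Hy ->]]. apply (proj1 Hf), cuts_of_le, Hy.
Qed.

End Extension.
End Cuts.
End Completion.

Theorem mainTheorem3 (Sig : nat -> Type) (X : Type) (p : label Sig X)
  (hp : arity p = 0) :
  conservative_completion (Phi_le p) (Psi_le p) (@Phi_to_Psi Sig X) /\
  (forall (Q : Type) (leQ : Q -> Q -> Prop), cpo leQ ->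
   forall f : Phi Sig X -> Q, continuous (Phi_le p) leQ f ->
   forall g : Psi Sig X -> Q,
     continuous (Psi_le p) leQ g -> (forall x, g (Phi_to_Psi x) = f x) ->
     forall s : Psi Sig X,
       is_join leQ
         (fun q => exists (n : nat) (x : Phi Sig X),
            proj1_sig (Phi_to_Psi x) = cut p n (proj1_sig s) /\ q = f x)
         (g s)).
Proof.
  split.
  - split; [exact (Psi_cpo p)|]. split; [exact Phi_to_Psi_inj|].
    split; [intros x y; reflexivity|]. split; [exact (Phi_join_is_Psi_join p)|].
    intros Q leQ HQ f Hf. exists (extension p hp HQ Hf).
    split; [split; [apply extension_continuous | apply extension_extends]|].
    intros g [Hg Hgf]. extensionality s.
    exact (is_join_unique (proj1 HQ) (extension_spec p hp HQ Hf s)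
             (extension_is_join p hp Hg Hgf s)).
  - intros Q leQ _ f _ g Hg Hgf s.
    apply (is_join_ext (D := image f (cuts_of p s))); [|exact (extension_is_join p hp Hg Hgf s)].
    intros q. split.
    + intros [x [[n Hn] ->]]. exists n, x. auto.
    + intros [n [x [Hn ->]]]. exists x. split; [exists n; exact Hn | reflexivity].
Qed.
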